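(* Let $d\ge 3$, let $\mathcal M$ be a model of $\mathrm{PQM}_d$ with domain $\mathbb M$, and let $\kappa:\mathbb M\to\mathbb H_d$ be the function such that for all $m\in\mathbb M$, $p\in\mathbb H_d$: $[m:p]^{\mathcal M}\iff\kappa(m)\le p$. Then $\kappa$ is a strong $\mathcal L_d$-morphism from $\mathcal M$ to $\mathcal H_d$; that is, for all $m\in\mathbb M$: (1) for all $p\in\mathbb H_d$, $[m:p]^{\mathcal M}\iff[\kappa(m):p]^{\mathcal H_d}$; (2) for all $q\in\mathbb H_d$, $\kappa(\pi_q^{\mathcal M}(m))=\kappa(m)\,\&\,q$; (3) for all $U\in\mathbb U_d$, $\kappa(u_U^{\mathcal M}(m))=U(\kappa(m))$.
   Context: Notation. For $d\ge 1$, $\mathbb H_d$ is the set of complex linear subspaces of $\mathbb C^d$, ordered by inclusion $\le$, with $\top=\mathbb C^d$, $\bot=\{0\}$, $p^\bot$ the orthogonal complement, $p\wedge q=p\cap q$ and $p\vee q=p+q$. $\mathbb U_d$ is the set of unitary operators on $\mathbb C^d$, and for $U\in\mathbb U_d$, $p\in\mathbb H_d$, $U(p)=\{Uv: v\in p\}$. The Sasaki projection is $p\,\&\,q := q\cap(q^\bot+p)$. Subspaces $p,q$ are compatible iff $p=(p\wedge q)\vee(p\wedge q^\bot)$. Language $\mathcal L_d$: a first-order language without equality and without constants, having a unary function symbol $u_U$ for each $U\in\mathbb U_d$, a unary function symbol $\pi_q$ for each $q\in\mathbb H_d$, and a unary relation symbol $[\,\cdot:p]$ for each $p\in\mathbb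 H_d$. Theory $\mathrm{PQM}_d$ (over $\mathcal L_d$) has the following axioms, for all $p,q\in\mathbb H_d$ and $U\in\mathbb U_d$: ($\neg\bot$) $\exists x\,\neg[x:\bot]$; ($\top$) $\forall x\,[x:\top]$; ($\le$) if $p\le q$: $\forall x\,([x:p]\to[x:q])$; ($\wedge$) if $p,q$ are compatible: $\forall x\,([x:p]\wedge[x:q]\to[x:p\wedge q])$; ($\pi_i$) $\forall x\,([x:p]\to[\pi_q(x):p\,\&\,q])$; ($\pi_c$) if $p\le q$: $\forall x\,([\pi_p(\pi_q(x)):\bot]\to[\pi_p(x):\bot])$; ($\pi_\bot$) $\forall x\,([\pi_q(x):\bot]\to[x:q^\bot])$; ($u_i$) $\forall x\,([x:p]\to[u_U(x):U(p)])$; ($u_e$) $\forall x\,([u_U(x):p]\to[x:U^{-1}(p)])$. Hilbert model $\mathcal H_d$: the $\mathcal L_d$-structure with domain $\mathbb H_d$, $u_U^{\mathcal H_d}(x)=U(x)$, $\pi_q^{\mathcal H_d}(x)=x\,\&\,q$, and $[x:p]^{\mathcal H_d}$ holds iff $x\le p$. *)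

(* C^d is modelled as row vectors 'rV[C]_d with
   C := Stdlib's reals R (a real closed field via Rstruct) adjoined i,
   i.e. the field of complex numbers R[i] (real_closed/complex.v). *)
From HB Require Import structures.
From mathcomp Require Import all_boot all_order all_algebra.
From mathcomp Require Import complex.
From mathcomp Require Import Rstruct.
From Stdlib Require Import Reals.

Set Implicit Arguments.
Unset Strict Implicit.
Unset Printing Implicit Defensive.

Import Order.TTheory GRing.Theory Num.Theory.
Local Open Scope ring_scope.

Definition CC : numClosedFieldType := (Rdefinitions.R)[i].

(* A subspace is represented by the
   canonical square matrix <<A>> whose row space is that subspace, so that
   Leibniz equality in [Hd d] is equality of subspaces. *)
Definition Hd (d : nat) := {A : 'M[CC]_d | <<A>>%MS == A}.

Lemma genmx_canon (d : nat) (A : 'M[CC]_d) : <<(<<A>>%MS)>>%MS == <<A>>%MS.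
Proof. by rewrite genmx_id. Qed.

Definition spanH (d : nat) (A : 'M[CC]_d) : Hd d :=
  exist _ <<A>>%MS (genmx_canon A).

Definition H_le (d : nat) (p q : Hd d) : Prop := (val p <= val q)%MS.
Definition H_top (d : nat) : Hd d := spanH (1%:M : 'M[CC]_d).
Definition H_bot (d : nat) : Hd d := spanH (0 : 'M[CC]_d).
Definition H_meet (d : nat) (p q : Hd d) : Hd d := spanH (val p :&: val q)%MS.
Definition H_join (d : nat) (p q : Hd d) : Hd d := spanH (val p + val q)%MS.

(* Orthogonal complement w.r.t. the standard Hermitian inner product
   <u,v> = sum_i u_i conj(v_i)  (sesquilinear.v's orthomx with form 1). *)
Definition H_perp (d : nat) (p : Hd d) : Hd d :=
  spanH (orthomx Num.conj (1%:M : 'M[CC]_d) (val p)).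

Definition sasaki (d : nat) (p q : Hd d) : Hd d :=
  H_meet q (H_join (H_perp q) p).

Definition compatible (d : nat) (p q : Hd d) : Prop :=
  p = H_join (H_meet p q) (H_meet p (H_perp q)).

(* U_d : unitary operators on C^d, given by their matrix (acting on column
   vectors: v |-> U v). *)
Definition Ud (d : nat) := {U : 'M[CC]_d | U \is unitarymx}.

(* U(p) = { U v : v in p }; for row vectors v this is v *m U^T. *)
Definition H_act (d : nat) (U : 'M[CC]_d) (p : Hd d) : Hd d :=
  spanH (val p *m U^T).
Definition u_app (d : nat) (U : Ud d) (p : Hd d) : Hd d := H_act (val U) p.
Definition u_inv_app (d : nat) (U : Ud d) (p : Hd d) : Hd d :=
  H_act (invmx (val U)) p.

Record Lstructure (d : nat) := {
  Ldom :> Type;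
  u_fun : Ud d -> Ldom -> Ldom;
  pi_fun : Hd d -> Ldom -> Ldom;
  Lrel : Ldom -> Hd d -> Prop  (* Lrel x p  is  [x : p] *)
}.

Definition PQM_model (d : nat) (M : Lstructure d) : Prop :=
  (exists x : M, ~ Lrel x (H_bot d)) /\
  (forall x : M, Lrel x (H_top d)) /\
  (forall p q : Hd d, H_le p q -> forall x : M, Lrel x p -> Lrel x q) /\
  (forall p q : Hd d, compatible p q ->
     forall x : M, Lrel x p -> Lrel x q -> Lrel x (H_meet p q)) /\
  (forall p q : Hd d, forall x : M, Lrel x p -> Lrel (pi_fun q x) (sasaki p q)) /\
  (forall p q : Hd d, H_le p q ->
     forall x : M, Lrel (pi_fun p (pi_fun q x)) (H_bot d) ->
                   Lrel (pi_fun p x) (H_bot d)) /\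
  (forall q : Hd d, forall x : M, Lrel (pi_fun q x) (H_bot d) -> Lrel x (H_perp q)) /\
  (forall (p : Hd d) (U : Ud d) (x : M), Lrel x p -> Lrel (u_fun U x) (u_app U p)) /\
  (forall (p : Hd d) (U : Ud d) (x : M), Lrel (u_fun U x) p -> Lrel x (u_inv_app U p)).

Definition Hilbert_model (d : nat) : Lstructure d :=
  {| Ldom := Hd d;
     u_fun := fun U x => u_app U x;
     pi_fun := fun q x => sasaki x q;
     Lrel := fun x p => H_le x p |}.

Definition strong_morphism (d : nat) (M N : Lstructure d) (f : M -> N) : Prop :=
  forall m : M,
    (forall p : Hd d, Lrel m p <-> Lrel (f m) p) /\
    (forall q : Hd d, f (pi_fun q m) = pi_fun q (f m)) /\
    (forall U : Ud d, f (u_fun U m) = u_fun U (f m)).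

(* Write a := kappa m and k := kappa (pi_q m).  Axiom (pi_i) gives
   k <= a & q, in particular k <= q.  Conversely let p := q /\ k^perp.  Since k <= p^perp, the
   Sasaki projection k & p is 0, so (pi_i) gives [pi_p (pi_q m) : bot];
   (pi_c) and (pi_bot) then turn this into [m : p^perp], i.e. a <= p^perp.
   Hence a & q <= q /\ p^perp, which is k by the orthomodular law.
   Unitaries are simpler: (u_i) gives kappa (u_U m) <= U(a) and (u_e) gives
   a <= U^-1(kappa (u_U m)). *)
From mathcomp Require Import all_boot all_order all_algebra.
From mathcomp Require Import sesquilinear spectral.

Set Implicit Arguments.
Unset Strict Implicit.
Unset Printing Implicit Defensive.
Import Num.Def.
Local Open Scope ring_scope.

Section OrthomodularLaw.
Variables (C : numClosedFieldType) (n : nat).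
Local Notation "B ^!" := (orthomx conjC (hermitian1mx n) B) : matrix_set_scope.

Lemma orthomodular_capmx (K Q : 'M[C]_n) : (K <= Q)%MS ->
  (Q :&: (Q :&: K^!)^! <= K)%MS.
Proof.
move=> KQ; set P := (Q :&: K^!)%MS.
have KP : (K <= P^!)%MS by rewrite orthomx_sym capmxSr.
have QKP : (Q <= K + P)%MS.
  rewrite /P capmxC (matrix_modl _ KQ) sub_capmx submx_refl andbT.
  by rewrite (addsmx_ortho K) submx1.
apply: submx_trans (_ : (Q :&: P^! <= (K + P) :&: P^!)%MS) _.
  by rewrite capmxS.
by rewrite -(matrix_modl _ KP) orthomx_ortho_disj addsmx0.
Qed.

End OrthomodularLaw.

Section SubspaceLattice.
Variable d : nat.
Local Notation "B ^!" := (orthomx conjC (hermitian1mx d) B) : matrix_set_scope.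
Implicit Types (p q a k : Hd d) (U : Ud d).

Lemma H_le_refl p : H_le p p.
Proof. exact: submx_refl. Qed.

Lemma H_le_trans p q r : H_le p q -> H_le q r -> H_le p r.
Proof. exact: submx_trans. Qed.

Lemma H_le_anti p q : H_le p q -> H_le q p -> p = q.
Proof.
move=> pq qp; apply: val_inj; rewrite -(eqP (valP p)) -(eqP (valP q)).
by apply/genmxP; rewrite /eqmx pq qp.
Qed.

Lemma val_perp p : (val (H_perp p) :=: (val p)^!)%MS.
Proof. exact: genmxE. Qed.

Lemma val_meet p q : (val (H_meet p q) :=: val p :&: val q)%MS.
Proof. exact: genmxE. Qed.

Lemma val_sasaki p q : (val (sasaki p q) :=: val q :&: ((val q)^! + val p))%MS.
Proof.
apply: eqmx_trans (genmxE _) _; apply: cap_eqmx => //.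
by apply: eqmx_trans (genmxE _) _; apply: adds_eqmx => //; apply: val_perp.
Qed.

Lemma H_le_bot p : H_le p (H_bot d) <-> (val p <= (0 : 'M[CC]_d))%MS.
Proof. by rewrite /H_le genmxE. Qed.

Lemma sasaki_le p q : H_le (sasaki p q) q.
Proof. by rewrite /H_le val_sasaki capmxSl. Qed.

Lemma sasaki_bot_of_perp p q : H_le p (H_perp q) -> H_le (sasaki p q) (H_bot d).
Proof.
rewrite /H_le val_perp => pq; apply/H_le_bot.
rewrite val_sasaki -(orthomx_ortho_disj (val q)) capmxS //.
by rewrite addsmx_sub submx_refl.
Qed.

Lemma sasaki_le_of_perp_meet a q k : H_le k q ->
  H_le a (H_perp (H_meet q (H_perp k))) -> H_le (sasaki a q) k.
Proof.
rewrite /H_le => kq.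
have meet_perp : (val (H_meet q (H_perp k)) :=: val q :&: (val k)^!)%MS.
  by apply: eqmx_trans (val_meet _ _) _; apply: cap_eqmx => //; apply: val_perp.
rewrite val_perp (eqmx_ortho _ meet_perp) => ap.
apply: submx_trans (orthomodular_capmx kq).
by rewrite val_sasaki capmxS // addsmx_sub ap andbT submx_ortho capmxSl.
Qed.

Lemma u_app_le_of_le_inv a k U : H_le a (u_inv_app U k) -> H_le (u_app U a) k.
Proof.
have Uunit : val U \in unitmx by apply: unitarymx_unit; exact: valP.
rewrite /H_le /u_app /u_inv_app /H_act !genmxE => /(submxMr (val U)^T).
by rewrite -mulmxA -trmx_mul mulmxV // trmx1 mulmx1.
Qed.

End SubspaceLattice.

Section Representation.
Variables (d : nat) (M : Lstructure d) (kappa : M -> Hd d).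
Hypothesis kappaP : forall (m : M) (p : Hd d), Lrel m p <-> H_le (kappa m) p.

Lemma Lrel_kappa (m : M) : Lrel m (kappa m).
Proof. exact/kappaP/H_le_refl. Qed.

Section Projections.
Hypothesis pi_i : forall (p q : Hd d) (x : M),
  Lrel x p -> Lrel (pi_fun q x) (sasaki p q).
Hypothesis pi_c : forall p q : Hd d, H_le p q -> forall x : M,
  Lrel (pi_fun p (pi_fun q x)) (H_bot d) -> Lrel (pi_fun p x) (H_bot d).
Hypothesis pi_bot : forall (q : Hd d) (x : M),
  Lrel (pi_fun q x) (H_bot d) -> Lrel x (H_perp q).

Lemma kappa_pi (m : M) (q : Hd d) : kappa (pi_fun q m) = sasaki (kappa m) q.
Proof.
set a := kappa m; set k := kappa (pi_fun q m).
have k_le : H_le k (sasaki a q) by apply/kappaP/pi_i/Lrel_kappa.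
have kq : H_le k q := H_le_trans k_le (sasaki_le a q).
set p := H_meet q (H_perp k).
have pq : H_le p q by rewrite /H_le val_meet capmxSl.
have kp : H_le k (H_perp p).
  by rewrite /H_le val_perp orthomx_sym val_meet -val_perp capmxSr.
have ppq_bot : Lrel (pi_fun p (pi_fun q m)) (H_bot d).
  apply/kappaP/(H_le_trans _ (sasaki_bot_of_perp kp)).
  exact/kappaP/pi_i/Lrel_kappa.
have ap : H_le a (H_perp p) by apply/kappaP/pi_bot/(pi_c pq).
exact: H_le_anti k_le (sasaki_le_of_perp_meet kq ap).
Qed.

End Projections.

Section Unitaries.
Hypothesis u_i : forall (p : Hd d) (U : Ud d) (x : M),
  Lrel x p -> Lrel (u_fun U x) (u_app U p).
Hypothesis u_e : forall (p : Hd d) (U : Ud d) (x : M),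
  Lrel (u_fun U x) p -> Lrel x (u_inv_app U p).

Lemma kappa_u (m : M) (U : Ud d) : kappa (u_fun U m) = u_app U (kappa m).
Proof.
apply: H_le_anti; first exact/kappaP/u_i/Lrel_kappa.
exact/u_app_le_of_le_inv/kappaP/u_e/Lrel_kappa.
Qed.

End Unitaries.
End Representation.

(* The bound d >= 3 only matters for the existence of kappa (Gleason's
   theorem), which is part of the hypotheses here. *)
Theorem mainTheorem11 (d : nat) (hd : (3 <= d)%N)
  (M : Lstructure d) (HM : PQM_model M)
  (kappa : M -> Hd d)
  (Hkappa : forall (m : M) (p : Hd d), Lrel m p <-> H_le (kappa m) p) :
  strong_morphism (N := Hilbert_model d) kappa.
Proof.
case: HM => _ [_ [_ [_ [pi_i [pi_c [pi_bot [u_i u_e]]]]]]] m.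
split; [exact: Hkappa | split=> ? /=].
- exact: kappa_pi.
- exact: kappa_u.
Qed.
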